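(* Let $S$ be a relation algebra and $\# : S\to\mathbb{N}\cup\{\infty\}$ a function. Consider the properties (C1a) $\#\bot=0$; (C1b) $\forall x:\ \#x=0\iff x=\bot$; (C4a) $\forall x,y:\ \#x+\#y=\#(x\sqcup y)+\#(x\sqcap y)$; (C4b) $\forall x,y:\ x\sqsubseteq y\implies\#x\le\#y$; (C7a) $\forall x:\ \#x=\#\top\iff x=\top$; (C9) $\#\top\neq\infty$. Then: 1. (C1a) and (C4a) together imply (C4b). 2. (C1b), (C4a) and (C9) together imply (C7a).
   Context: A Stone relation algebra is a structure $(S,\sqcup,\sqcap,\cdot,\overline{\,\cdot\,},{}^{\smile},\bot,\top,1)$ (write $xy$ for $x\cdot y$, $\overline{x}$ for the pseudocomplement, $x^{\smile}$ for the converse) such that: $(S,\sqcup,\sqcap,\bot,\top)$ is a bounded distributive lattice with order $x\sqsubseteq y\iff x\sqcup y=y$; $x\sqcap y=\bot\iff x\sqsubseteq\overline{y}$; $\overline{x}\sqcup\overline{\overline{x}}=\top$; $\cdot$ is associative with two-sided unit $1$, distributes over $\sqcup$ on both sides, and $\bot$ is a zero of $\cdot$; $x^{\smile\smile}=x$, $(xy)^{\smile}=y^{\smile}x^{\smile}$, $(x\sqcup y)^{\smile}=x^{\smile}\sqcup y^{\smile}$; $\overline{\overline{1}}=1$; $\overline{\overline{xy}}=\overline{\overline{x}}\,\overline{\overline{y}}$; $xy\sqcap z\sqsubseteq x(y\sqcap x^{\smile}z)$. A relation algebra is a Stone relation algebra with $\overline{\overline{x}}=x$ for all $x$. Arithmetic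 in $\mathbb{N}\cup\{\infty\}$ is the usual one with $n+\infty=\infty+n=\infty$, $n\le\infty$. *)

Inductive enat : Type := Fin (n : nat) | Inf.

Definition eadd (a b : enat) : enat :=
  match a, b with
  | Fin m, Fin n => Fin (m + n)
  | _, _ => Inf
  end.

Definition ele (a b : enat) : Prop :=
  match a, b with
  | _, Inf => True
  | Fin m, Fin n => m <= n
  | Inf, Fin _ => False
  end.

Record StoneRelAlg : Type := {
  carrier :> Type;
  sup : carrier -> carrier -> carrier;
  inf : carrier -> carrier -> carrier;
  comp : carrier -> carrier -> carrier;
  pcompl : carrier -> carrier;
  conv : carrier -> carrier;
  bot : carrier;
  top : carrier;
  one : carrier;
  sup_assoc : forall x y z, sup x (sup y z) = sup (sup x y) z;
  inf_assoc : forall x y z, inf x (inf y z) = inf (inf x y) z;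
  sup_comm : forall x y, sup x y = sup y x;
  inf_comm : forall x y, inf x y = inf y x;
  sup_absorb : forall x y, sup x (inf x y) = x;
  inf_absorb : forall x y, inf x (sup x y) = x;
  inf_sup_distr : forall x y z, inf x (sup y z) = sup (inf x y) (inf x z);
  sup_bot : forall x, sup x bot = x;
  inf_top : forall x, inf x top = x;
  (* pseudocomplement, Stone identity ; x ⊑ y is sup x y = y *)
  pcompl_spec : forall x y, inf x y = bot <-> sup x (pcompl y) = pcompl y;
  stone : forall x, sup (pcompl x) (pcompl (pcompl x)) = top;
  comp_assoc : forall x y z, comp x (comp y z) = comp (comp x y) z;
  comp_one_l : forall x, comp one x = x;
  comp_one_r : forall x, comp x one = x;
  comp_sup_distr_l : forall x y z, comp x (sup y z) = sup (comp x y) (comp x z);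
  comp_sup_distr_r : forall x y z, comp (sup x y) z = sup (comp x z) (comp y z);
  comp_bot_l : forall x, comp bot x = bot;
  comp_bot_r : forall x, comp x bot = bot;
  conv_invol : forall x, conv (conv x) = x;
  conv_comp : forall x y, conv (comp x y) = comp (conv y) (conv x);
  conv_sup : forall x y, conv (sup x y) = sup (conv x) (conv y);
  pp_one : pcompl (pcompl one) = one;
  pp_comp : forall x y,
    pcompl (pcompl (comp x y)) = comp (pcompl (pcompl x)) (pcompl (pcompl y));
  dedekind : forall x y z,
    sup (inf (comp x y) z) (comp x (inf y (comp (conv x) z)))
    = comp x (inf y (comp (conv x) z))
}.

Arguments sup {s}. Arguments inf {s}. Arguments comp {s}.
Arguments pcompl {s}. Arguments conv {s}.
Arguments bot {s}. Arguments top {s}. Arguments one {s}.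

Definition le {S : StoneRelAlg} (x y : S) : Prop := sup x y = y.

Record RelAlg : Type := {
  sra :> StoneRelAlg;
  pcompl_invol : forall x : sra, pcompl (pcompl x) = x
}.

(* In a relation algebra every [x] has a Boolean complement [¬x]: [x ⊔ ¬x = ⊤] and
   [x ⊓ ¬x = ⊥].  If [x ⊑ y], then [y] is the disjoint join of [x] and [y ⊓ ¬x], so
   modularity of [#] together with [#⊥ = 0] gives [#y = #x + #(y ⊓ ¬x) >= #x].
   Likewise [#x + #¬x = #⊤]; when [#x = #⊤] is finite it cancels, so [#¬x = 0],
   hence [¬x = ⊥] and [x = ¬¬x = ¬⊥ = ⊤]. *)

From Stdlib Require Import Lia.

Lemma eadd_0_r (a : enat) : eadd a (Fin 0) = a.
Proof. destruct a; simpl; auto. Qed.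

Lemma ele_eadd_r (a b : enat) : ele a (eadd a b).
Proof. destruct a, b; simpl; auto; lia. Qed.

Lemma eadd_Fin_eq_l (n : nat) (b : enat) : eadd (Fin n) b = Fin n -> b = Fin 0.
Proof.
  destruct b as [k|]; simpl; intro H; [|discriminate].
  injection H; intro; f_equal; lia.
Qed.

Definition modular {S : StoneRelAlg} (card : S -> enat) : Prop :=
  forall x y : S, eadd (card x) (card y) = eadd (card (sup x y)) (card (inf x y)).

Section StoneLattice.
Variable S : StoneRelAlg.
Implicit Types x y : S.

Lemma sup_idem x : sup x x = x.
Proof. rewrite <- (inf_absorb S x x) at 2. apply sup_absorb. Qed.

Lemma inf_of_le x y : le x y -> inf x y = x.
Proof. intro Hxy; rewrite <- Hxy; apply inf_absorb. Qed.

Lemma inf_bot_r x : inf x bot = bot.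
Proof.
  rewrite inf_comm; rewrite <- (inf_absorb S bot x) at 2.
  rewrite sup_comm, sup_bot; reflexivity.
Qed.

Lemma sup_top_r x : sup x top = top.
Proof.
  rewrite sup_comm; rewrite <- (sup_absorb S top x) at 2.
  rewrite inf_comm, inf_top; reflexivity.
Qed.

Lemma inf_pcompl x : inf x (pcompl x) = bot.
Proof. rewrite inf_comm; apply (pcompl_spec S), sup_idem. Qed.

Lemma pcompl_bot : pcompl (bot : S) = top.
Proof.
  assert (Htop : le (top : S) (pcompl bot)) by apply (pcompl_spec S), inf_bot_r.
  unfold le in Htop; rewrite <- Htop, sup_comm; apply sup_top_r.
Qed.

Lemma inf_inf_pcompl x y : inf x (inf y (pcompl x)) = bot.
Proof.
  rewrite inf_assoc, (inf_comm S x y), <- inf_assoc, inf_pcompl; apply inf_bot_r.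
Qed.

End StoneLattice.

Section RelationAlgebra.
Variable S : RelAlg.
Implicit Types x y : S.

Lemma sup_pcompl x : sup x (pcompl x) = top.
Proof. rewrite sup_comm; rewrite <- (pcompl_invol S x) at 2; apply stone. Qed.

Lemma sup_inf_pcompl_of_le x y : le x y -> sup x (inf y (pcompl x)) = y.
Proof.
  intro Hxy.
  rewrite <- (inf_top S y) at 2; rewrite <- (sup_pcompl x).
  rewrite inf_sup_distr, (inf_comm S y x), (inf_of_le S x y Hxy); reflexivity.
Qed.

Lemma card_le (card : S -> enat) :
  card bot = Fin 0 -> modular card -> forall x y, le x y -> ele (card x) (card y).
Proof.
  intros Hbot Hmod x y Hxy.
  specialize (Hmod x (inf y (pcompl x))).
  rewrite sup_inf_pcompl_of_le, inf_inf_pcompl, Hbot, eadd_0_r in Hmod by exact Hxy.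
  rewrite <- Hmod; apply ele_eadd_r.
Qed.

Lemma card_eq_top (card : S -> enat) :
  (forall x, card x = Fin 0 <-> x = bot) -> modular card -> card top <> Inf ->
  forall x, card x = card top -> x = top.
Proof.
  intros Hzero Hmod Hfin x Hx.
  specialize (Hmod x (pcompl x)).
  rewrite sup_pcompl, inf_pcompl, (proj2 (Hzero bot) eq_refl), eadd_0_r, Hx in Hmod.
  destruct (card top) as [n|]; [|contradiction].
  apply eadd_Fin_eq_l, Hzero in Hmod.
  rewrite <- (pcompl_invol S x), Hmod; apply pcompl_bot.
Qed.

End RelationAlgebra.

Theorem mainTheorem4 (S : RelAlg) (card : S -> enat) :
  (* 1. (C1a) /\ (C4a) -> (C4b) *)
  ( card bot = Fin 0 ->
    (forall x y : S, eadd (card x) (card y) = eadd (card (sup x y)) (card (inf x y))) ->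
    (forall x y : S, le x y -> ele (card x) (card y)) )
  /\
  (* 2. (C1b) /\ (C4a) /\ (C9) -> (C7a) *)
  ( (forall x : S, card x = Fin 0 <-> x = bot) ->
    (forall x y : S, eadd (card x) (card y) = eadd (card (sup x y)) (card (inf x y))) ->
    card top <> Inf ->
    (forall x : S, card x = card top <-> x = top) ).
Proof.
  split.
  - exact (card_le S card).
  - intros Hzero Hmod Hfin x; split.
    + exact (card_eq_top S card Hzero Hmod Hfin x).
    + intros ->; reflexivity.
Qed.
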